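(* Consider the data-selling model described in the context, with network $G$ on $n$ buyers, and assume $z_0<\frac{1}{2\sqrt{\gamma}}\cdot\frac{n+1}{2n+1}$. Let $m=\alpha(G)$, and let $C$ and $C'$ be optimal contracts. (Their target sets $M(C),M(C')$ are maximum independent sets of size $m$, and both have common precision $z=\sqrt{m/\gamma}-z_0$.) Let $k(C)=(m_1,\dots,m_{n-m})$ be the values $m_i=|N_i\cap M(C)|$ for $i\in N\setminus M(C)$, arranged in non-increasing order. Define $k(C')=(m'_1,\dots,m'_{n-m})$ in the same way. Then $w(z_0,G,M(C))\ge w(z_0,G,M(C'))$ if either of the following holds: (i) $k(C)\ge k(C')$ componentwise; (ii) $\sum_{i=1}^{n-m}m_i=\sum_{i=1}^{n-m}m'_i$, and $k(C)$ dominates $k(C')$ in the second-order stochastic dominance sense (that is, the uniform distribution on the entries of $k(C)$ second-order stochastically dominates the uniform distribution on the entries of $k(C')$).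
   Context: Model. There is a finite set of buyers $N=\{1,\dots,n\}$ and an undirected network $G$ on $N$: for $i\neq j$, $g_{ij}=g_{ji}\in\{0,1\}$, with $g_{ij}=1$ iff $i$ and $j$ are linked. $N_i=\{j\neq i:g_{ij}=1\}$ is the set of neighbors of $i$. A state $\theta\sim N(0,1/z_0)$ with $z_0>0$ is unknown to all. A contract $C$ of the seller consists of a target set $M(C)\subseteq N$, a common precision $z>0$, and prices $p_i\ge0$ for $i\in M(C)$. Each $i\in M(C)$ receives a signal $s_i=\theta+\varepsilon_i$, with $\varepsilon_i\sim N(0,1/z)$ independent. Each buyer observes the signals of his neighbors in $M(C)$ (and his own if he is in $M(C)$) and then chooses $a_i$ to maximize $E[-(a_i-\theta)^2]$. With $m_i=|N_i\cap M(C)|$, buyer $i\in M(C)$ gets expected payoff $-\frac{1}{z_0+(m_i+1)z}-p_i$, and buyer $i\notin M(C)$ gets $-\frac{1}{z_0+m_iz}$. Buyer $i\in M(C)$ accepts iff $p_i\le \frac{1}{z_0+m_iz}-\frac{1}{z_0+(m_i+1)z}$. A contract is feasible if every $i\in M(C)$ accepts. The seller's profit is $\pi(C)=\sum_{i\in M(C)}p_i-\gamma z$ with $\gamma>0$. An optimal contract is a feasible contract maximizing $\pi$. A maximum independent set is a largest set of pairwise unlinked buyers, and $\alpha(G)$ is its size. At an optimal contract (with prices $p_i=\frac1{z_0}-\sqrt{\gamma/m}$ and $z=\sqrt{m/\gamma}-z_0$), the consumer welfare (the sum of buyers' expected payoffs) is $$w(z_0,G,M(C))=-\sum_{i\in M(C)}\frac{1}{z_0}-\sum_{i\in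 N\setminus M(C)}\frac{1}{z_0+m_i\left(\sqrt{m/\gamma}-z_0\right)}.$$ *)

From HB Require Import structures.
From mathcomp Require Import all_boot all_order all_algebra.
From mathcomp Require Import reals.
Set Implicit Arguments. Unset Strict Implicit. Unset Printing Implicit Defensive.
Import Order.TTheory GRing.Theory Num.Theory.
Local Open Scope ring_scope.

Section Model.
Variables (R : realType) (T : finType) (e : rel T).

Definition nbrs (i : T) : {set T} := [set j | (j != i) && e i j].

Definition mi (M : {set T}) (i : T) : nat := #|nbrs i :&: M|.

Definition independent (A : {set T}) : bool :=
  [forall i in A, forall j in A, ~~ e i j].
Definition alpha : nat := \max_(A : {set T} | independent A) #|A|.

(* A contract: target set, common precision, prices (only prices of
   buyers in the target set matter). *)
Record contract := Contract {
  target : {set T};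
  prec : R;
  price : T -> R }.

Variables (z0 gamma : R).

Definition accepts (C : contract) (i : T) : Prop :=
  price C i <= (z0 + (mi (target C) i)%:R * prec C)^-1
               - (z0 + ((mi (target C) i).+1)%:R * prec C)^-1.

Definition feasible (C : contract) : Prop :=
  0 < prec C /\ (forall i, i \in target C -> 0 <= price C i) /\
  (forall i, i \in target C -> accepts C i).

Definition profit (C : contract) : R :=
  \sum_(i in target C) price C i - gamma * prec C.

Definition optimal (C : contract) : Prop :=
  feasible C /\ forall C', feasible C' -> profit C' <= profit C.

(* consumer welfare w(z0,G,M) at the optimal contract, m = alpha(G) *)
Definition welfare (M : {set T}) : R :=
  - (\sum_(i in M) z0^-1)
  - \sum_(i in ~: M)
      (z0 + (mi M i)%:R * (Num.sqrt (alpha%:R / gamma) - z0))^-1.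

Definition kvec (M : {set T}) : seq nat :=
  sort geq [seq mi M i | i <- enum (~: M)].

End Model.

Definition comp_ge (k k' : seq nat) : bool := all2 (fun a b => b <= a)%N k k'.

(* Second-order stochastic dominance of the uniform distribution on the
   entries of k over that on the entries of k': for every t,
   int_{-oo}^t F_k <= int_{-oo}^t F_k', i.e.
   (1/|k|) sum_i (t - k_i)^+ <= (1/|k'|) sum_i (t - k'_i)^+. *)
Definition sosd (R : realType) (k k' : seq nat) : Prop :=
  forall t : R,
    (size k)%:R^-1 * \sum_(x <- k) Num.max (t - x%:R) 0
    <= (size k')%:R^-1 * \sum_(x <- k') Num.max (t - x%:R) 0.

(* A targeted buyer with [m] targeted neighbours pays at most [gain z m], the value
   of one more signal.  Selling to [a] buyers without targeted neighbours earns at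
   most [peak a = (sqrt a - z0 sqrt gamma)^2 / z0], attained at
   [z = sqrt (a / gamma) - z0], and [peak] increases because the hypothesis on [z0]
   gives [z0 sqrt gamma < 1/3].  A target set containing an edge earns strictly less
   than [peak alpha]: removing a vertex of minimum degree together with its
   neighbours, as in the Caro-Wei bound, compares its revenue with that of an
   independent set, using [(k + 1) gain z k <= 3 / (8 z0)] for [k >= 1].  So optimal
   contracts target exactly [alpha] buyers and the welfare is
   [- alpha / z0 - sum_i f (m_i)] with [f x = 1 / (z0 + x z)] decreasing and convex.
   Part (i) is the monotonicity of [f]; for part (ii), [f] on [0..N] is an affine
   function plus a nonnegative combination of hinges [(t - x)^+], whose sums are
   ordered by second-order dominance, while the affine part depends only on the
   length and the sum of the sequence. *)

From HB Require Import structures.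
From mathcomp Require Import all_boot all_order all_algebra.
From mathcomp Require Import reals.
From mathcomp Require Import ring lra.
Import Order.TTheory GRing.Theory Num.Theory.
Local Open Scope ring_scope.
Set Implicit Arguments. Unset Strict Implicit.

Section Gain.
Variables (R : realFieldType) (z0 : R).
Hypothesis z0_gt0 : 0 < z0.

Definition gain (z : R) (k : nat) : R :=
  (z0 + k%:R * z)^-1 - (z0 + k.+1%:R * z)^-1.

Lemma affine_gt0 (z : R) (k : nat) : 0 <= z -> 0 < z0 + k%:R * z.
Proof. by move=> z_ge0; rewrite ltr_pwDl // mulr_ge0. Qed.

Lemma gainE (z : R) (k : nat) : 0 <= z ->
  gain z k = z / ((z0 + k%:R * z) * (z0 + k%:R * z + z)).
Proof.
move=> z_ge0; have := affine_gt0 k z_ge0; have := affine_gt0 k.+1 z_ge0.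
rewrite /gain -addn1 natrD mulrDl mul1r addrA => hS hk.
by field; rewrite !gt_eqF.
Qed.

Lemma gain0 (z : R) : gain z 0 = z0^-1 - (z0 + z)^-1.
Proof. by rewrite /gain mul0r addr0 mul1r. Qed.

Lemma gain_ge0 (z : R) (k : nat) : 0 <= z -> 0 <= gain z k.
Proof.
move=> z_ge0; have hk := affine_gt0 k z_ge0.
by rewrite gainE // divr_ge0 // ltW // mulr_gt0 // ltr_wpDr.
Qed.

Lemma inv_affine_nonincreasing (z : R) (a b : nat) : 0 <= z -> (b <= a)%N ->
  (z0 + a%:R * z)^-1 <= (z0 + b%:R * z)^-1.
Proof.
move=> z_ge0 ba; rewrite lef_pV2 ?posrE ?affine_gt0 // lerD2l.
by rewrite ler_wpM2r // ler_nat.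
Qed.

Lemma gain_nonincreasing (z : R) (k l : nat) : 0 <= z -> (k <= l)%N ->
  gain z l <= gain z k.
Proof.
move=> z_ge0 kl; rewrite !gainE //; have hk := affine_gt0 k z_ge0.
have le_kl : z0 + k%:R * z <= z0 + l%:R * z by rewrite lerD2l ler_wpM2r ?ler_nat.
by rewrite ler_wpM2l // lef_pV2 ?posrE; nra.
Qed.

(* With [K = k%:R], [3 (z0 + K z) (z0 + (K + 1) z) - 8 (K + 1) z z0] equals
   [((6 z0 - (2 K + 5) z)^2 + (32 K^2 + 16 K - 25) z^2) / 12]. *)
Lemma mulSn_gain_le (z : R) (k : nat) : 0 < z -> (1 <= k)%N ->
  k.+1%:R * gain z k <= 3 / (8 * z0).
Proof.
move=> z_gt0 k_ge1; rewrite gainE; last exact: ltW.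
have hK := affine_gt0 k (ltW z_gt0).
have K_ge1 : 1 <= (k%:R : R) by rewrite ler1n.
rewrite -[k.+1%:R]natr1; set K := (k%:R : R) in K_ge1 hK *.
have hKS : 0 < z0 + K * z + z by rewrite ltr_wpDr // ltW.
rewrite -subr_ge0.
have -> : 3 / (8 * z0) - (K + 1) * (z / ((z0 + K * z) * (z0 + K * z + z))) =
  (3 * ((z0 + K * z) * (z0 + K * z + z)) - (K + 1) * z * (8 * z0)) /
  (8 * z0 * ((z0 + K * z) * (z0 + K * z + z))).
  by field; rewrite !gt_eqF.
rewrite divr_ge0 //; last by rewrite !mulr_ge0 // ltW.
have sq : 0 <= (6 * z0 - (2 * K + 5) * z) ^+ 2 by apply: sqr_ge0.
have q : 0 <= (32 * K ^+ 2 + 16 * K - 25) * z ^+ 2.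
  by apply: mulr_ge0; [nra | exact: sqr_ge0].
nra.
Qed.

End Gain.

Lemma sqrtr_ge1 (R : rcfType) (a : R) : 1 <= a -> 1 <= Num.sqrt a.
Proof. by move=> a_ge1; rewrite -sqrtr1 ler_sqrt // (le_trans ler01). Qed.

Section Peak.
Variables (R : rcfType) (z0 gamma : R).
Hypotheses (z0_gt0 : 0 < z0) (gamma_gt0 : 0 < gamma).

Definition peak (a : R) : R := (Num.sqrt a - z0 * Num.sqrt gamma) ^+ 2 / z0.

Lemma le_peak (a z : R) : 0 <= a -> 0 < z -> a * gain z0 z 0 - gamma * z <= peak a.
Proof.
move=> a_ge0 z_gt0; have hz : 0 < z0 + z by rewrite addr_gt0.
have g_gt0 : 0 < Num.sqrt gamma by rewrite sqrtr_gt0.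
rewrite -[a in a * _](sqr_sqrtr a_ge0) -[gamma](sqr_sqrtr (ltW gamma_gt0)).
rewrite gain0 -subr_ge0 /peak; set s := Num.sqrt a; set g := Num.sqrt gamma.
have -> : (s - z0 * g) ^+ 2 / z0 - (s ^+ 2 * (z0^-1 - (z0 + z)^-1) - g ^+ 2 * z) =
  (s - g * (z0 + z)) ^+ 2 / (z0 + z) by field; rewrite !gt_eqF.
by rewrite divr_ge0 ?sqr_ge0 ?ltW.
Qed.

Lemma peak_attained (a : R) : 0 < a ->
  a * gain z0 (Num.sqrt (a / gamma) - z0) 0 - gamma * (Num.sqrt (a / gamma) - z0)
  = peak a.
Proof.
move=> a_gt0; have s_gt0 : 0 < Num.sqrt a by rewrite sqrtr_gt0.
have g_gt0 : 0 < Num.sqrt gamma by rewrite sqrtr_gt0.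
rewrite sqrtrM ?ltW // sqrtrV ?ltW // gain0 subrKC /peak.
have aE := sqr_sqrtr (ltW a_gt0); have gE := sqr_sqrtr (ltW gamma_gt0).
set s := Num.sqrt a in aE s_gt0 *; set g := Num.sqrt gamma in gE g_gt0 *.
by rewrite -aE -gE; field; rewrite !gt_eqF.
Qed.

Hypothesis small : z0 * Num.sqrt gamma < 1 / 3.

Lemma precision_gt0 (a : R) : 1 <= a -> 0 < Num.sqrt (a / gamma) - z0.
Proof.
move=> a_ge1; rewrite sqrtrM ?(le_trans ler01) // sqrtrV ?ltW //.
rewrite subr_gt0 ltr_pdivlMr ?sqrtr_gt0 //.
by have := sqrtr_ge1 a_ge1; have := small; lra.
Qed.

Lemma peak_lt (a b : R) : 0 <= a -> a < b -> 1 <= b -> peak a < peak b.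
Proof.
move=> a_ge0 ab b_ge1.
have sab : Num.sqrt a < Num.sqrt b by rewrite ltr_sqrt // (le_lt_trans a_ge0).
have sb_ge1 := sqrtr_ge1 b_ge1; have sa_ge0 := sqrtr_ge0 a.
rewrite -subr_gt0 /peak; have := small.
set s := Num.sqrt a in sab sa_ge0 *; set t := Num.sqrt b in sab sb_ge1 *.
set y := z0 * Num.sqrt gamma => y_lt.
have -> : (t - y) ^+ 2 / z0 - (s - y) ^+ 2 / z0 = (t - s) * (t + s - 2 * y) / z0.
  by field; rewrite gt_eqF.
by rewrite divr_gt0 // mulr_gt0 //; lra.
Qed.

Lemma mul_cap_lt_peak (a : R) : 1 <= a -> a * (3 / (8 * z0)) < peak a.
Proof.
move=> a_ge1; have s_ge1 := sqrtr_ge1 a_ge1.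
have y_ge0 : 0 <= z0 * Num.sqrt gamma by rewrite mulr_ge0 ?sqrtr_ge0 ?ltW.
rewrite -[a in a * _](sqr_sqrtr (le_trans ler01 a_ge1)) -subr_gt0 /peak.
have := small; set s := Num.sqrt a in s_ge1 *.
set y := z0 * Num.sqrt gamma in y_ge0 * => y_lt.
have -> : (s - y) ^+ 2 / z0 - s ^+ 2 * (3 / (8 * z0)) =
  (5/8 * (s - 8/5 * y) ^+ 2 - 3/5 * y ^+ 2) / z0 by field; rewrite gt_eqF.
rewrite divr_gt0 //.
have h1 : 49/225 <= (s - 8/5 * y) ^+ 2 by nra.
have h2 : y ^+ 2 <= 1/9 by nra.
lra.
Qed.

Lemma peakS_gt (a : R) : 1 <= a -> peak a + 3 / (8 * z0) < peak (a + 1).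
Proof.
move=> a_ge1; have a_ge0 := le_trans ler01 a_ge1.
have aE := sqr_sqrtr a_ge0; have aSE := sqr_sqrtr (addr_ge0 a_ge0 ler01).
have s_ge1 := sqrtr_ge1 a_ge1; have t_ge0 := sqrtr_ge0 (a + 1).
have y_ge0 : 0 <= z0 * Num.sqrt gamma by rewrite mulr_ge0 ?sqrtr_ge0 ?ltW.
rewrite -subr_gt0 /peak; have := small.
set s := Num.sqrt a in aE s_ge1 *; set t := Num.sqrt (a + 1) in aSE t_ge0 *.
set y := z0 * Num.sqrt gamma in y_ge0 * => y_lt.
have -> : (t - y) ^+ 2 / z0 - ((s - y) ^+ 2 / z0 + 3 / (8 * z0)) =
  (t ^+ 2 - s ^+ 2 - 3/8 - 2 * y * (t - s)) / z0 by field; rewrite gt_eqF.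
rewrite divr_gt0 // aSE -aE.
(* [t ^+ 2 = s ^+ 2 + 1] with [s >= 1] forces [t - s <= 1/2]. *)
have st : s <= t by nra.
have ts : (t - s) * 2 <= 1 by nra.
nra.
Qed.

End Peak.

Section Independence.
Variables (T : finType) (e : rel T).
Hypotheses (e_sym : symmetric e) (e_irr : irreflexive e).

Lemma independentP (A : {set T}) :
  reflect {in A &, forall i j, ~~ e i j} (independent e A).
Proof.
apply: (iffP forallP) => [indA i j iA jA | indA i].
  by have /implyP/(_ iA)/forallP/(_ j)/implyP := indA i; apply.
by apply/implyP => iA; apply/forallP => j; apply/implyP; apply: indA.
Qed.

Lemma independent_setU1 (A : {set T}) v :
  independent e A -> {in A, forall j, ~~ e v j} -> independent e (v |: A).
Proof.
move=> /independentP indA vA; apply/independentP => i j.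
case/setU1P=> [-> | iA] /setU1P [-> | jA]; rewrite ?e_irr //; first exact: vA.
- by rewrite e_sym vA.
- exact: indA.
Qed.

Definition cnbrs (S : {set T}) (v : T) : {set T} := v |: (nbrs e v :&: S).

Lemma independent_setU1_cnbrsD (S I : {set T}) v :
  I \subset S :\: cnbrs S v -> independent e I -> independent e (v |: I).
Proof.
move=> IS indI; apply: independent_setU1 => // j /(subsetP IS) /setDP [jS jNv].
move: jNv; apply: contraNN => evj; apply/setU1P; right; rewrite !inE evj jS !andbT.
by move: evj; apply: contraTneq => ->; rewrite e_irr.
Qed.

Lemma independent_setD1_isolated (S : {set T}) v : v \in S ->
  nbrs e v :&: S = set0 -> independent e (S :\ v) -> independent e S.
Proof.
move=> vS nbrs0 indS; rewrite -(setD1K vS).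
apply: independent_setU1 => // j /setD1P [jv jS]; apply/negP => evj.
have : j \in nbrs e v :&: S by rewrite !inE jv evj jS.
by rewrite nbrs0 inE.
Qed.

Lemma mi_independent (A : {set T}) i :
  independent e A -> i \in A -> mi e A i = 0%N.
Proof.
move=> /independentP indA iA; apply/eqP; rewrite cards_eq0; apply/eqP/setP => j.
rewrite !inE; case jA: (j \in A); last by rewrite andbF.
by rewrite (negbTE (indA i j iA jA)) andbF.
Qed.

Lemma independent_leq_alpha (A : {set T}) : independent e A -> (#|A| <= alpha e)%N.
Proof. by move=> indA; apply: (@leq_bigmax_cond _ (independent e) (fun B => #|B|)). Qed.

Lemma exists_maximum_independent :
  exists2 A : {set T}, independent e A & #|A| = alpha e.
Proof.
have indep0 : independent e set0 by apply/independentP => i; rewrite inE.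
have [A indA maxA] := @arg_maxnP _ set0 (independent e) (fun A => #|A|) indep0.
exists A => //; apply/eqP; rewrite eqn_leq independent_leq_alpha //=.
by apply/bigmax_leqP => B; apply: maxA.
Qed.

Lemma alpha_gt0 : (0 < #|T|)%N -> (0 < alpha e)%N.
Proof.
case/card_gt0P => x _; rewrite -(cards1 x) independent_leq_alpha //.
by apply/independentP => i j /set1P -> /set1P ->; rewrite e_irr.
Qed.

End Independence.

Section Revenue.
Variables (T : finType) (e : rel T).
Hypotheses (e_sym : symmetric e) (e_irr : irreflexive e).
Variables (R : realFieldType) (z0 z : R).
Hypotheses (z0_gt0 : 0 < z0) (z_gt0 : 0 < z).

Definition revenue (S : {set T}) : R := \sum_(i in S) gain z0 z (mi e S i).

Lemma revenue_independent (S : {set T}) :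
  independent e S -> revenue S = #|S|%:R * gain z0 z 0.
Proof.
move=> indS; rewrite /revenue (eq_bigr (fun=> gain z0 z 0)) ?sumr_const ?mulr_natl //.
by move=> i iS; rewrite mi_independent.
Qed.

Lemma revenue_le_min_degree (S : {set T}) v : v \in S ->
  (forall i, i \in S -> mi e S v <= mi e S i)%N ->
  revenue S <= (mi e S v).+1%:R * gain z0 z (mi e S v) + revenue (S :\: cnbrs e S v).
Proof.
move=> vS vmin; have NvS : cnbrs e S v \subset S by rewrite subUset sub1set vS subsetIr.
rewrite /revenue (big_setID (cnbrs e S v)) /= (setIidPr NvS); apply: lerD.
  have cardNv : #|cnbrs e S v| = (mi e S v).+1 by rewrite cardsU1 !inE eqxx.
  rewrite -cardNv mulr_natl -sumr_const; apply: ler_sum => i iNv.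
  by apply: gain_nonincreasing (ltW _) (vmin _ (subsetP NvS _ iNv)).
apply: ler_sum => i _; apply: gain_nonincreasing (ltW _) _ => //.
by apply: subset_leq_card; apply: setIS; apply: subsetDl.
Qed.

Local Notation cap := (3 / (8 * z0)).
Local Notation B := (Num.max (gain z0 z 0) cap).

Lemma mulSn_gain_le_max (d : nat) : d.+1%:R * gain z0 z d <= B.
Proof.
case: d => [|d]; first by rewrite mul1r le_max lexx.
by rewrite le_max (mulSn_gain_le _ z_gt0) ?orbT.
Qed.

Lemma independent_subset_revenue_le (S : {set T}) :
  exists I : {set T}, [/\ I \subset S, independent e I,
    revenue S <= #|I|%:R * B &
    ~~ independent e S -> revenue S + B <= #|I|%:R * B + cap].
Proof.
elim: {S}_.+1 {-2}S (ltnSn #|S|) => // n IH S.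
have [-> _ | [v0 v0S] cardS] := set_0Vmem S.
  have indep0 : independent e set0 by apply/independentP => i; rewrite inE.
  by exists set0; rewrite sub0set indep0 /revenue big_set0 cards0 mul0r.
have [v vS vmin] := @arg_minnP _ v0 (fun i => i \in S) (mi e S) v0S.
have split_rev := revenue_le_min_degree vS vmin.
set d := mi e S v in split_rev; set S' := S :\: cnbrs e S v in split_rev.
have vS' : v \notin S' by rewrite !inE eqxx.
have S'S : S' \subset S := subsetDl _ _.
have [|I' [I'S' indI' revI' revI'_gap]] := IH S'.
  rewrite -ltnS (leq_trans _ cardS) // ltnS proper_card //.
  by apply/properP; split=> //; exists v.
have vI' : v \notin I' by apply: contra (subsetP I'S' v) vS'.
exists (v |: I'); rewrite cardsU1 vI' add1n -natr1 mulrDl mul1r; split.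
- by rewrite subUset sub1set vS (subset_trans I'S' S'S).
- exact: (independent_setU1_cnbrsD e_sym e_irr (S := S) (v := v) I'S' indI').
- by have := mulSn_gain_le_max d; lra.
move=> nindS; have [d0 | d_gt0] := posnP d; last first.
  by have := mulSn_gain_le z0_gt0 z_gt0 d_gt0; lra.
have nbrs0 : nbrs e v :&: S = set0 by apply/eqP; rewrite -cards_eq0; apply/eqP.
have nindS' : ~~ independent e S'.
  apply: contra nindS; rewrite /S' /cnbrs nbrs0 setU0.
  exact: independent_setD1_isolated.
have revS' := revI'_gap nindS'; have gain0_le := mulSn_gain_le_max 0.
by rewrite d0 mul1r in split_rev; rewrite mul1r in gain0_le; lra.
Qed.

End Revenue.

Section SumComparison.
Variable R : realFieldType.

Lemma ler_sum_all2 (I : Type) (r : I -> I -> bool) (F : I -> R) (s s' : seq I) :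
  (forall a b, r a b -> F a <= F b) -> all2 r s s' ->
  \sum_(x <- s) F x <= \sum_(x <- s') F x.
Proof.
move=> leF; elim: s s' => [|a s IH] [|b s'] //= /andP [rab rss'].
by rewrite !big_cons lerD ?leF ?IH.
Qed.

Definition hinge (t : R) (x : nat) : R := Num.max (t - x%:R) 0.

Lemma hinge_natE (t x : nat) : (x <= t)%N -> hinge t%:R x = t%:R - x%:R.
Proof. by move=> xt; rewrite /hinge max_l // subr_ge0 ler_nat. Qed.

Lemma hinge_nat_eq0 (t x : nat) : (t <= x)%N -> hinge t%:R x = 0.
Proof. by move=> tx; rewrite /hinge max_r // subr_le0 ler_nat. Qed.

Lemma sum_affine (a b : R) (s : seq nat) :
  \sum_(x <- s) (a + b * x%:R) = (size s)%:R * a + b * (\sum_(x <- s) x)%N%:R.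
Proof.
elim: s => [|x s IH]; first by rewrite !big_nil mul0r mulr0 addr0.
by rewrite !big_cons IH natrD /= -natr1; ring.
Qed.

Variable f : nat -> R.
Local Notation D j := (f j - f j.+1).

(* The discrete Taylor formula
   [f x = f N + (N - x) f'(N) + \int (t - x)^+ f''(t) dt]. *)
Lemma hinge_expansion (N x : nat) : (x <= N)%N ->
  f x = f N + (N%:R - x%:R) * D N + \sum_(t < N) (D t - D t.+1) * hinge t.+1%:R x.
Proof.
move/subnKC <-; elim: (N - x)%N => [|d IH].
  rewrite addn0 subrr mul0r addr0 big1 ?addr0 // => t _.
  by rewrite hinge_nat_eq0 ?mulr0 // ltn_ord.
rewrite addnS big_ord_recr /= hinge_natE ?leqW ?leq_addr // {1}IH.
by rewrite -!natr1 natrD; ring.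
Qed.

Lemma sosd_sum_le (k k' : seq nat) :
  (forall j, D j.+1 <= D j) ->
  size k = size k' -> (\sum_(x <- k) x = \sum_(x <- k') x)%N ->
  (forall t : nat, \sum_(x <- k) hinge t%:R x <= \sum_(x <- k') hinge t%:R x) ->
  \sum_(x <- k) f x <= \sum_(x <- k') f x.
Proof.
move=> f_convex size_eq sum_eq hinge_le_sum.
set N := (\sum_(x <- k) x)%N.
have le_sum (l : seq nat) x : x \in l -> (x <= \sum_(y <- l) y)%N.
  by move=> xl; rewrite (big_rem _ xl) leq_addr.
have expand (l : seq nat) : {in l, forall x, x <= N}%N -> \sum_(x <- l) f x =
    (size l)%:R * (f N + N%:R * D N) - D N * (\sum_(x <- l) x)%N%:R
    + \sum_(t < N) (D t - D t.+1) * \sum_(x <- l) hinge t.+1%:R x.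
  move=> lN; rewrite big_seq (eq_bigr _ (fun x xl => hinge_expansion (lN x xl))).
  rewrite -big_seq big_split /= -mulNr -sum_affine exchange_big /=; congr (_ + _).
    by apply: eq_bigr => x _; ring.
  by apply: eq_bigr => t _; rewrite mulr_sumr.
rewrite (expand k (le_sum k)) expand; last by move=> x; rewrite /N sum_eq; apply: le_sum.
rewrite size_eq sum_eq lerD2l; apply: ler_sum => t _.
by rewrite ler_wpM2l ?subr_ge0.
Qed.

End SumComparison.

Lemma sosd_hinge (R : realType) (k k' : seq nat) : size k = size k' -> sosd R k k' ->
  forall t : R, \sum_(x <- k) hinge t x <= \sum_(x <- k') hinge t x.
Proof.
move=> size_eq le_k t; move: (le_k t) => {le_k}; rewrite -size_eq.
case: k size_eq => [|a k]; case: k' => [|b k'] //= _.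
by rewrite ler_pM2l // invr_gt0 ltr0n.
Qed.

Lemma mul_lt_third_of_ratio_bound (R : realFieldType) (z0 g : R) (n : nat) : 0 < g -> (0 < n)%N ->
  z0 < (2 * g)^-1 * ((n%:R + 1) / (2 * n%:R + 1)) -> z0 * g < 1 / 3.
Proof.
move=> g_gt0 n_gt0 hz0; have n_ge1 : 1 <= (n%:R : R) by rewrite ler1n.
have frac_le : (n%:R + 1) / (2 * n%:R + 1) <= 2 / 3 :> R.
  by rewrite ler_pdivrMr; lra.
have : z0 < (2 * g)^-1 * (2 / 3).
  by apply: (lt_le_trans hz0); rewrite ler_wpM2l // invr_ge0 mulr_ge0 // ltW.
rewrite -(ltr_pM2r g_gt0); congr (_ < _); by field; rewrite gt_eqF.
Qed.

Section Optimal.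
Variables (R : realType) (T : finType) (e : rel T).
Hypotheses (e_sym : symmetric e) (e_irr : irreflexive e).
Variables (z0 gamma : R).
Hypotheses (z0_gt0 : 0 < z0) (gamma_gt0 : 0 < gamma).
Hypothesis small : z0 * Num.sqrt gamma < 1 / 3.

Lemma profit_le_revenue (C : contract R T) : feasible e z0 C ->
  profit gamma C <= revenue e z0 (prec C) (target C) - gamma * prec C.
Proof. by case=> _ [_ acc]; rewrite /profit lerD2r; apply: ler_sum. Qed.

Lemma peak_le_optimal_profit (C : contract R T) : (0 < alpha e)%N ->
  optimal e z0 gamma C -> peak z0 gamma (alpha e)%:R <= profit gamma C.
Proof.
move=> alpha_gt0 [_ optC].
have [A indA cardA] := exists_maximum_independent e.
set z := Num.sqrt ((alpha e)%:R / gamma) - z0.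
have z_gt0 : 0 < z by apply: precision_gt0; rewrite ?ler1n.
apply: le_trans (optC (Contract A z (fun=> gain z0 z 0)) _).
  rewrite /profit /= sumr_const cardA -[gain _ _ _ *+ _]mulr_natl.
  by rewrite /z peak_attained ?ltr0n.
split=> //; split=> i iA /=; first by rewrite gain_ge0 ?ltW.
by rewrite /accepts /= mi_independent.
Qed.

Lemma nonindependent_revenue_lt_peak (S : {set T}) (z : R) : 0 < z ->
  (0 < alpha e)%N -> ~~ independent e S ->
  revenue e z0 z S - gamma * z < peak z0 gamma (alpha e)%:R.
Proof.
move=> z_gt0 alpha_gt0 nindS; set a := alpha e in alpha_gt0 *.
have a_ge1 : 1 <= (a%:R : R) by rewrite ler1n.
have gz_ge0 : 0 <= gamma * z by rewrite mulr_ge0 ?ltW.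
have [I [_ indI _ /(_ nindS) revI]] :=
  independent_subset_revenue_le e_sym e_irr z0_gt0 z_gt0 S.
have I_le : (#|I|%:R : R) <= a%:R by rewrite ler_nat independent_leq_alpha.
have cap_lt := mul_cap_lt_peak z0_gt0 small a_ge1.
set cap := 3 / (8 * z0) in revI cap_lt.
have cap_ge0 : 0 <= cap by rewrite divr_ge0 ?mulr_ge0 ?ltW.
set B := Num.max (gain z0 z 0) cap in revI.
have B_ge0 : 0 <= B by rewrite le_max cap_ge0 orbT.
have rev_le : revenue e z0 z S <= a%:R * B - B + cap.
  by have := ler_wpM2r B_ge0 I_le; lra.
have [gain_le | cap_lt_gain] := leP (gain z0 z 0) cap.
  by rewrite /B (max_r gain_le) in rev_le; lra.
rewrite /B (max_l (ltW cap_lt_gain)) in rev_le.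
have [a1 | a_ne1] := eqVneq a 1%N.
  by move: rev_le cap_lt; rewrite a1 mul1r => rev_le cap_lt; lra.
have a1_ge1 : 1 <= a%:R - 1 :> R.
  have : 2%:R <= a%:R :> R by rewrite ler_nat ltn_neqAle eq_sym a_ne1 alpha_gt0.
  lra.
have := le_peak z0_gt0 gamma_gt0 (le_trans ler01 a1_ge1) z_gt0.
have := peakS_gt z0_gt0 small a1_ge1; rewrite subrK -/cap.
by rewrite mulrBl mul1r; lra.
Qed.

Lemma revenue_lt_peak_alpha (S : {set T}) (z : R) : 0 < z -> (0 < alpha e)%N ->
  #|S| != alpha e -> revenue e z0 z S - gamma * z < peak z0 gamma (alpha e)%:R.
Proof.
move=> z_gt0 alpha_gt0 cardS.
have [indS | nindS] := boolP (independent e S); last first.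
  exact: nonindependent_revenue_lt_peak.
have cardS_lt : (#|S| < alpha e)%N by rewrite ltn_neqAle cardS independent_leq_alpha.
rewrite revenue_independent //.
apply: le_lt_trans (le_peak z0_gt0 gamma_gt0 (ler0n _ _) z_gt0) _.
by apply: peak_lt; rewrite ?ler1n ?ltr_nat.
Qed.

Lemma optimal_target_card (C : contract R T) : (0 < alpha e)%N ->
  optimal e z0 gamma C -> #|target C| = alpha e.
Proof.
move=> alpha_gt0 optC; apply/eqP; apply: contraT => cardC.
have [[z_gt0 _] _] := optC.
have := revenue_lt_peak_alpha z_gt0 alpha_gt0 cardC.
have := profit_le_revenue optC.1; have := peak_le_optimal_profit alpha_gt0 optC.
lra.
Qed.

End Optimal.

Lemma size_kvec (T : finType) (e : rel T) (M : {set T}) :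
  size (kvec e M) = (#|T| - #|M|)%N.
Proof. by rewrite size_sort size_map -cardE cardsCs setCK. Qed.

Lemma welfareE (R : realType) (T : finType) (e : rel T) (z0 gamma : R) (M : {set T}) :
  welfare e z0 gamma M = - (#|M|%:R / z0)
    - \sum_(x <- kvec e M) (z0 + x%:R * (Num.sqrt ((alpha e)%:R / gamma) - z0))^-1.
Proof.
rewrite /welfare sumr_const; congr (- _ - _); first by rewrite mulr_natl.
by rewrite /kvec (perm_big _ (permEl (perm_sort _ _))) big_map big_enum.
Qed.

Unset Implicit Arguments.

Theorem proposition3 (R : realType) (T : finType) (e : rel T)
  (e_sym : symmetric e) (e_irr : irreflexive e)
  (z0 gamma : R) (hz0 : 0 < z0) (hgamma : 0 < gamma)
  (hcond : z0 < (2 * Num.sqrt gamma)^-1 *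
                 ((#|T|%:R + 1) / (2 * #|T|%:R + 1)))
  (C C' : contract R T)
  (hC : optimal e z0 gamma C) (hC' : optimal e z0 gamma C') :
  (comp_ge (kvec e (target C)) (kvec e (target C')) \/
   ((\sum_(x <- kvec e (target C)) x = \sum_(x <- kvec e (target C')) x)%N /\
    sosd R (kvec e (target C)) (kvec e (target C')))) ->
  welfare e z0 gamma (target C') <= welfare e z0 gamma (target C).
Proof.
move=> hk; have [T0 | T_gt0] := posnP #|T|.
  have emptyE (M : {set T}) : M = set0.
    by apply/eqP; rewrite -cards_eq0 -leqn0 -T0 max_card.
  by rewrite (emptyE (target C)) (emptyE (target C')).
have sg_gt0 : 0 < Num.sqrt gamma by rewrite sqrtr_gt0.
have small := mul_lt_third_of_ratio_bound sg_gt0 T_gt0 hcond.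
have alpha_pos := alpha_gt0 e_irr T_gt0.
have alpha_ge1 : 1 <= (alpha e)%:R :> R by rewrite ler1n.
have zs_ge0 := ltW (precision_gt0 hgamma small alpha_ge1).
have cardC := optimal_target_card e_sym e_irr hz0 hgamma small alpha_pos hC.
have cardC' := optimal_target_card e_sym e_irr hz0 hgamma small alpha_pos hC'.
rewrite !welfareE cardC cardC' lerD2l lerN2.
case: hk => [k_ge | [sum_eq k_sosd]].
  by apply: (ler_sum_all2 _ k_ge) => a b; apply: inv_affine_nonincreasing.
have size_eq : size (kvec e (target C)) = size (kvec e (target C')).
  by rewrite !size_kvec cardC cardC'.
apply: (sosd_sum_le _ size_eq sum_eq) => [j | t]; first exact: gain_nonincreasing.
exact: sosd_hinge size_eq k_sosd t%:R.
Qed.
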